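(* Let $D$ be a digraph and let $H$ be a source-sink-split of $D$. Then $\operatorname{bw}(u(H))=\operatorname{dbw}(D)$.
   Context: All digraphs are finite and loopless, without parallel edges. A source has no incoming edges, a sink no outgoing edges. Two distinct vertices are source/sink-identifiable if both are sources or both are sinks; identifying them replaces them by one new vertex $\gamma$ with $N^-(\gamma)=N^-(x)\cup N^-(y)$ and $N^+(\gamma)=N^+(x)\cup N^+(y)$. A digraph $H$ is a source-sink-split of $D$ if every source and every sink of $H$ has degree exactly $1$ and $D$ is obtained from $H$ by a finite sequence of identifications of source/sink-identifiable pairs. $u(H)$ is the undirected multigraph with one edge $xy$ per directed edge $\vec{xy}$. Branch-width of an undirected multigraph $G$: minimum over $(T,\tau)$ ($T$ a tree of maximum degree at most three, $\tau$ a bijection from leaves onto $E(G)$) of the maximum over tree edges $t$ of the number of vertices incident with an edge of $\tau(Y)$ and an edge of $E(G)\setminus\tau(Y)$, $Y$ the leaves on one side of $T-t$ (0 if no tree edges). Directed branch-width: same with $\beta$ onto $E(D)$ and order $|S^V_{\beta(Y)}\cup S^V_{E(D)\setminus\beta(Y)}|$, where $S^V_X=\{y: \exists x,z,\ \vec{xy}\in E(D)\setminus X,\ \vec{yz}\in X\}$. *)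

From mathcomp Require Import all_boot finmap.
Set Implicit Arguments. Unset Strict Implicit. Unset Printing Implicit Defensive.
Local Open Scope fset_scope.

(* Using a set of pairs
   excludes parallel edges (two edges with the same tail and head). *)
Record digraph := Digraph { dv : {fset nat}; de : {fset (nat * nat)} }.

Definition wf_digraph (D : digraph) : Prop :=
  forall e, e \in de D -> [/\ e.1 \in dv D, e.2 \in dv D & e.1 != e.2].

Definition is_source (D : digraph) (v : nat) : bool :=
  (v \in dv D) && ~~ [exists e : de D, (val e).2 == v].
Definition is_sink (D : digraph) (v : nat) : bool :=
  (v \in dv D) && ~~ [exists e : de D, (val e).1 == v].

Definition degree (D : digraph) (v : nat) : nat :=
  #|` [fset e in de D | (e.1 == v) || (e.2 == v)] |.

(* Identification of a source/sink-identifiable pair x, y into a new vertex g: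
   N^-(g) = N^-(x) u N^-(y), N^+(g) = N^+(x) u N^+(y), all other vertices and
   edges unchanged. *)
Definition ident_map (x y g : nat) (v : nat) : nat :=
  if (v == x) || (v == y) then g else v.

Definition identify (D : digraph) (x y g : nat) : digraph :=
  Digraph (g |` (dv D `\ x `\ y))
          [fset (ident_map x y g e.1, ident_map x y g e.2) | e in de D].

Definition identifiable (D : digraph) (x y : nat) : bool :=
  [&& x \in dv D, y \in dv D, x != y &
      (is_source D x && is_source D y) || (is_sink D x && is_sink D y)].

Inductive obtained : digraph -> digraph -> Prop :=
| obtained_refl D : obtained D D
| obtained_step H x y g D :
    identifiable H x y -> g \notin (dv H `\ x `\ y) ->
    obtained (identify H x y g) D -> obtained H D.

Definition isomorphic (D1 D2 : digraph) : Prop :=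
  exists f : nat -> nat,
    [/\ {in dv D1 &, injective f},
        [fset f v | v in dv D1] = dv D2 &
        [fset (f e.1, f e.2) | e in de D1] = de D2].

Definition ss_split (H D : digraph) : Prop :=
  (forall v, (is_source H v || is_sink H v) -> degree H v = 1%N) /\
  exists D', obtained H D' /\ isomorphic D' D.

(* A (possibly empty) tree on vertex set 'I_n given by an adjacency relation *)
Definition acyclic_rel n (t : rel 'I_n) : Prop :=
  ~ exists (x : 'I_n) (p : seq 'I_n),
      [/\ (2 <= size p)%N, uniq (x :: p), path t x p & t (last x p) x].

Definition is_tree n (t : rel 'I_n) : Prop :=
  [/\ symmetric t, irreflexive t, (forall x y, connect t x y) & acyclic_rel t].

Definition tdeg n (t : rel 'I_n) (v : 'I_n) : nat := #|[set w | t v w]|.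

Definition is_leaf n (t : rel 'I_n) (v : 'I_n) : bool := (tdeg t v <= 1)%N.

Definition del_edge n (t : rel 'I_n) (a b : 'I_n) : rel 'I_n :=
  [rel u v | t u v && ~~ (((u == a) && (v == b)) || ((u == b) && (v == a)))].

Definition side n (t : rel 'I_n) (a b : 'I_n) : {set 'I_n} :=
  [set l | is_leaf t l & connect (del_edge t a b) a l].

Definition bdec_width_le (E : finType) (f : {set E} -> nat) (k : nat) : Prop :=
  exists (n : nat) (t : rel 'I_n) (tau : 'I_n -> E),
    [/\ is_tree t,
        (forall v, tdeg t v <= 3)%N,
        {in [pred l | is_leaf t l] &, injective tau},
        (forall e : E, exists2 l, is_leaf t l & tau l = e) &
        (forall a b, t a b -> f (tau @: side t a b) <= k)%N].

Definition is_bwidth (E : finType) (f : {set E} -> nat) (k : nat) : Prop :=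
  bdec_width_le f k /\ (forall k', bdec_width_le f k' -> (k <= k')%N).

(* Undirected multigraph u(H): one edge xy per directed edge (x,y) of H, so
   its edge set is indexed by de H.  Order of X = number of vertices incident
   with an edge of X and an edge outside X. *)
Definition incident (D : digraph) (v : nat) (e : de D) : bool :=
  ((val e).1 == v) || ((val e).2 == v).

Definition u_order (H : digraph) (X : {set de H}) : nat :=
  #|` [fset v in dv H | [exists e in X, incident v e] &&
                         [exists e in ~: X, incident v e]] |.

Definition SV (D : digraph) (X : {set de D}) : {fset nat} :=
  [fset y in dv D | [exists e in ~: X, (val e).2 == y] &&
                    [exists e in X, (val e).1 == y]].

Definition d_order (D : digraph) (X : {set de D}) : nat :=
  #|` SV X `|` SV (~: X) |.

Definition bw_u (H : digraph) (k : nat) : Prop := is_bwidth (@u_order H) k.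
Definition dbw (D : digraph) (k : nat) : Prop := is_bwidth (@d_order D) k.

From mathcomp Require Import all_boot finmap.
From Stdlib Require Import FunctionalExtensionality Classical.
Set Implicit Arguments. Unset Strict Implicit. Unset Printing Implicit Defensive.

(* Unfolding the split gives a relabelling psi of vertices (identifications
   followed by the isomorphism) with E(D) = {(psi x, psi y) | (x,y) in E(H)},
   which never glues the head of an H-edge to the tail of another one unless
   they were already equal (only two sources or two sinks are glued).  Hence
   pi : E(H) -> E(D), e |-> psi o e, is onto and, because sources and sinks of
   H have degree one, the vertices counted by the directed order of Y ⊆ E(D)
   are exactly the psi-images of those counted by the undirected order of
   pi^-1(Y):   d_order Y = u_order (pi^-1 Y).

   The rest is a general fact about branch decompositions for two order
   functions f1 on E1, f2 on E2 related through a surjection pi: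
   - pruning: deleting the leaves whose labels lie outside a transversal R of
     the fibres of pi turns a decomposition for f1 into one for f2 whose width
     is no larger, provided f2 (pi (X ∩ R)) <= f1 X;
   - growing: splitting, one element at a time, the leaf of the
     representative of a fibre into two leaves turns a decomposition for f2
     into one for f1, provided f1 (pi^-1 Y) <= f2 Y and subsets of a fibre are
     cheap for f1.
   Both order functions thus admit decompositions of exactly the same widths,
   and the two branch-widths coincide. *)

Lemma connect_hom (T1 T2 : finType) (e1 : rel T1) (e2 : rel T2) (g : T1 -> T2) :
  (forall u w, e1 u w -> (g u == g w) || e2 (g u) (g w)) ->
  forall u w, connect e1 u w -> connect e2 (g u) (g w).
Proof.
move=> H u w /connectP [p pth ->]; elim: p u pth => [|w' p IH] u /=.
  by move=> _; exact: connect0.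
case/andP=> euw pth; apply: connect_trans (IH _ pth).
by case/orP: (H _ _ euw) => [/eqP->|]; [exact: connect0|exact: connect1].
Qed.

Lemma connect_emb (T1 T2 : finType) (e1 : rel T1) (e2 : rel T2) (g : T1 -> T2) :
  (forall u w, e1 u w -> e2 (g u) (g w)) ->
  forall u w, connect e1 u w -> connect e2 (g u) (g w).
Proof. by move=> H; apply: connect_hom => u w /H ->; rewrite orbT. Qed.

Lemma connect_no_out (T : finType) (e : rel T) z y :
  (forall w, ~~ e z w) -> connect e z y -> y = z.
Proof.
move=> H /connectP [[|w p] /= pth ->] //.
by case/andP: pth => ezw; rewrite (negbTE (H w)) in ezw.
Qed.

Lemma connect_no_in (T : finType) (e : rel T) x z :
  (forall u, ~~ e u z) -> connect e x z -> x = z.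
Proof.
move=> H /connectP [p]; elim/last_ind: p => [|p w _] //=.
rewrite rcons_path last_rcons => /andP [_ ew] Ez; subst z.
by rewrite (negbTE (H _)) in ew.
Qed.

Lemma leaf_nb_uniq n (t : rel 'I_n) v a b : is_leaf t v -> t v a -> t v b -> a = b.
Proof.
rewrite /is_leaf /tdeg => /card_le1P H ta tb.
have ain : a \in [set w | t v w] by rewrite inE.
by have := H _ ain b; rewrite !inE tb => /esym /eqP.
Qed.

(* Attaching a new leaf l (a fresh vertex of 'I_n.+1) to the vertex m of a
   tree t on 'I_n; the old vertices are [lift l x].  Every tree surgery of the
   proof (pruning and splitting leaves) is expressed through [attach]. *)
Section Attach.
Variables (n : nat) (t : rel 'I_n) (m : 'I_n) (l : 'I_n.+1).

Definition attach : rel 'I_n.+1 := fun u w =>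
  match unlift l u, unlift l w with
  | Some x, Some y => t x y
  | Some x, None => x == m
  | None, Some y => y == m
  | None, None => false
  end.

Definition contract (u : 'I_n.+1) : 'I_n := odflt m (unlift l u).

Lemma attach_ll x y : attach (lift l x) (lift l y) = t x y.
Proof. by rewrite /attach !liftK. Qed.
Lemma attach_lL x : attach (lift l x) l = (x == m).
Proof. by rewrite /attach liftK unlift_none. Qed.
Lemma attach_Ll y : attach l (lift l y) = (y == m).
Proof. by rewrite /attach liftK unlift_none. Qed.
Lemma attach_LL : attach l l = false.
Proof. by rewrite /attach unlift_none. Qed.
Lemma contract_lift x : contract (lift l x) = x.
Proof. by rewrite /contract liftK. Qed.
Lemma contract_L : contract l = m.
Proof. by rewrite /contract unlift_none. Qed.

Lemma attach_uL u : attach u l -> u = lift l m.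
Proof.
by case: (unliftP l u) => [x ->|->]; rewrite ?attach_LL // attach_lL => /eqP->.
Qed.
Lemma attach_Lu u : attach l u -> u = lift l m.
Proof.
by case: (unliftP l u) => [x ->|->]; rewrite ?attach_LL // attach_Ll => /eqP->.
Qed.

Lemma attach_contract u w :
  attach u w -> (contract u == contract w) || t (contract u) (contract w).
Proof.
case: (unliftP l u) => [x ->|->]; case: (unliftP l w) => [y ->|->];
  rewrite ?attach_ll ?attach_lL ?attach_Ll ?attach_LL ?contract_lift ?contract_L //.
- by move=> ->; rewrite orbT.
- by move/eqP->; rewrite eqxx.
- by move/eqP->; rewrite eqxx.
Qed.

Lemma del_attach_ll a b x y :
  del_edge attach (lift l a) (lift l b) (lift l x) (lift l y) = del_edge t a b x y.
Proof. by rewrite /del_edge /= attach_ll !(inj_eq (@lift_inj _ l)). Qed.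

Lemma del_attach_contract a b u w : del_edge attach (lift l a) (lift l b) u w ->
  (contract u == contract w) || del_edge t a b (contract u) (contract w).
Proof.
case: (unliftP l u) => [x ->|->]; case: (unliftP l w) => [y ->|->].
- by rewrite del_attach_ll !contract_lift => ->; rewrite orbT.
- by rewrite /del_edge /= attach_lL contract_lift contract_L => /andP [/eqP-> _]; rewrite eqxx.
- by rewrite /del_edge /= attach_Ll contract_lift contract_L => /andP [/eqP-> _]; rewrite eqxx.
- by rewrite /del_edge /= attach_LL.
Qed.

Lemma attach_side_old a b x :
  connect (del_edge attach (lift l a) (lift l b)) (lift l a) (lift l x) =
  connect (del_edge t a b) a x.
Proof.
apply/idP/idP.
  by move/(connect_hom (@del_attach_contract a b)); rewrite !contract_lift.
by apply: connect_emb => u w; rewrite del_attach_ll.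
Qed.

Lemma attach_side_old_new a b :
  connect (del_edge attach (lift l a) (lift l b)) (lift l a) l =
  connect (del_edge t a b) a m.
Proof.
apply/idP/idP.
  by move/(connect_hom (@del_attach_contract a b)); rewrite contract_lift contract_L.
rewrite -attach_side_old => H; apply: connect_trans H _; apply: connect1.
rewrite /del_edge /= attach_lL eqxx /=.
by rewrite ![l == lift _ _](negbTE (neq_lift _ _)) !andbF.
Qed.

Lemma attach_side_new u : connect (del_edge attach l (lift l m)) l u = (u == l).
Proof.
apply/idP/idP; last by move/eqP->; exact: connect0.
move/connect_no_out => ->; rewrite ?eqxx // => w.
rewrite /del_edge /=; apply/negP => /andP [/attach_Lu -> ].
by rewrite !eqxx.
Qed.

Lemma attach_side_m x : (forall y, connect t m y) ->
  connect (del_edge attach (lift l m) l) (lift l m) (lift l x).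
Proof.
move=> C; apply: (connect_emb (g := lift l)) (C x) => u w tuw.
rewrite /del_edge /= attach_ll tuw /=.
by rewrite ![lift _ _ == l]eq_sym ![l == lift _ _](negbTE (neq_lift _ _)) !andbF.
Qed.

Lemma attach_side_m_new : connect (del_edge attach (lift l m) l) (lift l m) l = false.
Proof.
apply/negP => /connect_no_in H.
have : lift l m = l.
  apply: H => u; rewrite /del_edge /=; apply/negP => /andP [/attach_uL -> ].
  by rewrite !eqxx.
by move/eqP; rewrite eq_sym (negbTE (neq_lift _ _)).
Qed.

Lemma path_attach_lift x p : path attach (lift l x) (map (lift l) p) = path t x p.
Proof. by elim: p x => [|y p IH] x //=; rewrite attach_ll IH. Qed.

Lemma attach_sym : symmetric t -> symmetric attach.
Proof.
move=> S u w; case: (unliftP l u) => [x ->|->]; case: (unliftP l w) => [y ->|->];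
by rewrite ?attach_ll ?attach_lL ?attach_Ll ?attach_LL.
Qed.

Lemma attach_irr : irreflexive t -> irreflexive attach.
Proof.
by move=> I u; case: (unliftP l u) => [x ->|->]; rewrite ?attach_ll ?attach_LL.
Qed.

(* A cycle through the new leaf l would visit its unique neighbour twice. *)
Lemma attach_cycle_avoids_new x p :
  uniq (x :: p) -> cycle attach (x :: p) -> (2 <= size p)%N -> l \notin x :: p.
Proof.
move=> un cyc sz; apply/negP => lin.
case: (rot_to lin) => i q Er.
have := rot_cycle i attach (x :: p); rewrite Er cyc /= rcons_path => /andP [pq lq].
have := rot_uniq i (x :: p); rewrite Er un => unq.
have szq : (2 <= size q)%N.
  by have := size_rot i (x :: p); rewrite Er /= => [[->]].
case: q Er pq lq szq unq => [|a q] //= Er /andP [la _] lq szq.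
case: q Er lq szq => [|b q] //= Er lq szq /andP [_ /andP [anin _]].
by move: anin; rewrite (attach_Lu la) -(attach_uL lq) (mem_last b q).
Qed.

Lemma attach_tree : is_tree t -> is_tree attach.
Proof.
case=> S I C Ac; split; [exact: attach_sym | exact: attach_irr | |].
  have Cm : forall u, connect attach (lift l m) u.
    move=> u; case: (unliftP l u) => [x ->|->].
      by apply: (connect_emb (g := lift l)) (C m x) => a b; rewrite attach_ll.
    by apply: connect1; rewrite attach_lL.
  move=> u w; apply: connect_trans (Cm w).
  by rewrite (sym_connect_sym (attach_sym S)).
move=> [x [p [sz un pth lst]]].
have cyc : cycle attach (x :: p) by rewrite /= rcons_path pth lst.
have lnin := attach_cycle_avoids_new un cyc sz.
apply: Ac; exists (contract x), (map contract p).
have nl : forall u, u \in x :: p -> lift l (contract u) = u.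
  move=> u uin; case: (unliftP l u) => [y ->|E]; first by rewrite contract_lift.
  by move: lnin; rewrite -E uin.
have Ep : map (lift l) (map contract p) = p.
  by rewrite -map_comp map_id_in // => u uin /=; apply: nl; rewrite inE uin orbT.
split.
- by rewrite size_map.
- by rewrite -(map_inj_uniq (@lift_inj _ l)) /= nl ?mem_head // Ep.
- by rewrite -path_attach_lift nl ?mem_head // Ep.
- by rewrite -attach_ll -last_map Ep !nl ?mem_head ?mem_last.
Qed.

Lemma attach_tree_inv : is_tree attach -> is_tree t.
Proof.
case=> S I C Ac; split.
- by move=> x y; rewrite -!attach_ll S.
- by move=> x; rewrite -attach_ll I.
- move=> x y; have := connect_hom attach_contract (C (lift l x) (lift l y)).
  by rewrite !contract_lift.
move=> [x [p [sz un pth lst]]]; apply: Ac.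
exists (lift l x), (map (lift l) p); split.
- by rewrite size_map.
- by rewrite -map_cons (map_inj_uniq (@lift_inj _ l)).
- by rewrite path_attach_lift.
- by rewrite last_map attach_ll.
Qed.

Lemma attach_nbset x : [set w | attach (lift l x) w] =
  lift l @: [set y | t x y] :|: (if x == m then [set l] else set0).
Proof.
apply/setP => w; rewrite !inE.
case: (unliftP l w) => [y ->|->].
  rewrite attach_ll (mem_imset _ _ (@lift_inj _ l)) inE.
  case: (x == m); rewrite ?inE; last by rewrite orbF.
  by rewrite eq_sym (negbTE (neq_lift _ _)) orbF.
rewrite attach_lL; case: (x == m); rewrite ?inE ?eqxx ?orbT //.
rewrite orbF; apply/esym/imsetP => [[y _ /eqP]].
by rewrite (negbTE (neq_lift _ _)).
Qed.

Lemma tdeg_attach_lift x : tdeg attach (lift l x) = (tdeg t x + (x == m))%N.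
Proof.
rewrite /tdeg attach_nbset cardsU (card_imset _ (@lift_inj _ l)).
have -> : lift l @: [set y | t x y] :&: (if x == m then [set l] else set0) = set0.
  apply/setP => w; rewrite !inE; case: (x == m); rewrite ?inE ?andbF //.
  apply/negP => /andP [/imsetP [y _ ->]]; by rewrite eq_sym (negbTE (neq_lift _ _)).
by rewrite cards0 subn0; case: (x == m); rewrite ?cards1 ?cards0.
Qed.

Lemma tdeg_attach_new : tdeg attach l = 1%N.
Proof.
rewrite /tdeg -(cards1 (lift l m)); congr (#|pred_of_set _|).
apply/setP => w; rewrite !inE.
apply/idP/idP; first by move/attach_Lu->.
by move/eqP->; rewrite attach_Ll.
Qed.

End Attach.

Lemma ord0_absurd (v : 'I_0) : False.
Proof. by case: v. Qed.

Lemma bdec_empty (E : finType) (f : {set E} -> nat) k :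
  (E -> False) -> bdec_width_le f k.
Proof.
move=> He; exists 0, (fun _ _ => false), (fun v => False_rect E (ord0_absurd v)).
split; try by move=> v; case: (ord0_absurd v).
- split; try by move=> v; case: (ord0_absurd v).
  by case=> v [p _]; case: (ord0_absurd v).
- by move=> e; case: (He e).
Qed.

Lemma leaf_attach n (T : rel 'I_n.+2) l : is_tree T -> is_leaf T l ->
  exists m : 'I_n.+1, T = attach (fun x y => T (lift l x) (lift l y)) m l.
Proof.
case=> S I C Ac lf.
have [w Tlw] : exists w, T l w.
  case/connectP: (C l (lift l ord0)) => [[|w p] /= pth E].
    by move: (neq_lift l ord0); rewrite E eqxx.
  by exists w; case/andP: pth.
case: (unliftP l w) Tlw => [m ->|->]; last by rewrite I.
move=> Tlm; exists m.
apply: functional_extensionality => u; apply: functional_extensionality => v.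
case: (unliftP l u) => [x ->|->]; case: (unliftP l v) => [y ->|->].
- by rewrite attach_ll.
- rewrite attach_lL S; apply/idP/idP; first by move/(leaf_nb_uniq lf Tlm)/lift_inj->.
  by move/eqP->.
- rewrite attach_Ll; apply/idP/idP; first by move/(leaf_nb_uniq lf Tlm)/lift_inj->.
  by move/eqP->.
- by rewrite attach_LL I.
Qed.

(* A decomposition in which only the leaves in K carry meaningful labels; the
   other leaves are waiting to be pruned. *)
Section Prune.
Variables (E : finType) (f : {set E} -> nat) (k : nat).

Record dec_on n (t : rel 'I_n) (tau : 'I_n -> E) (K : {set 'I_n}) : Prop := DecOn {
  don_tree : is_tree t;
  don_deg : forall v, (tdeg t v <= 3)%N;
  don_leaf : forall v, v \in K -> is_leaf t v;
  don_inj : {in K &, injective tau};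
  don_cov : forall e, exists2 v, v \in K & tau v = e;
  don_width : forall a b, t a b -> (f (tau @: (side t a b :&: K)) <= k)%N }.

Lemma dec_on_prune n (T : rel 'I_n.+2) tau K l :
  dec_on T tau K -> is_leaf T l -> l \notin K ->
  exists t' tau' K', @dec_on n.+1 t' tau' K'.
Proof.
move=> kd lf lK; have [m ET] := leaf_attach (don_tree kd) lf.
set t' := (fun x y => T (lift l x) (lift l y)) in ET.
rewrite ET in kd lf; case: kd => tr dg lv inj cov wd.
exists t', (fun x => tau (lift l x)), [set x | lift l x \in K]; split.
- exact: attach_tree_inv tr.
- by move=> v; apply: leq_trans (dg (lift l v)); rewrite tdeg_attach_lift leq_addr.
- move=> v; rewrite inE => /lv; rewrite /is_leaf tdeg_attach_lift.
  by apply: leq_trans; rewrite leq_addr.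
- by move=> x y; rewrite !inE => xK yK /(inj _ _ xK yK) /lift_inj.
- move=> e; case: (cov e) => v vK <-.
  case: (unliftP l v) vK => [x ->|->]; last by rewrite (negbTE lK).
  by move=> xK; exists x; rewrite ?inE.
- move=> a b tab; have := wd (lift l a) (lift l b); rewrite attach_ll => /(_ tab).
  suff -> : side (attach t' m l) (lift l a) (lift l b) :&: K =
            lift l @: (side t' a b :&: [set x | lift l x \in K]).
    by rewrite -imset_comp.
  apply/setP => u; rewrite !inE.
  case: (unliftP l u) => [x ->|->].
    rewrite (mem_imset _ _ (@lift_inj _ l)) !inE attach_side_old.
    case: (boolP (lift l x \in K)) => xK; rewrite ?andbF //.
    have := lv _ xK; rewrite /is_leaf tdeg_attach_lift => lx.
    by rewrite lx (leq_trans _ lx) ?leq_addr.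
  rewrite (negbTE lK) andbF; apply/esym/negP => /imsetP [x _ /eqP].
  by rewrite (negbTE (neq_lift _ _)).
Qed.

Lemma dec_on_all n t tau K : @dec_on n t tau K ->
  (forall v, is_leaf t v -> v \in K) -> bdec_width_le f k.
Proof.
case=> tr dg lv inj cov wd allK; exists n, t, tau; split => //.
- by move=> x y lx ly; apply: inj; apply: allK.
- by move=> e; case: (cov e) => v /lv lf <-; exists v.
- move=> a b tab; have := wd a b tab.
  suff -> : side t a b :&: K = side t a b by [].
  apply/setP => u; rewrite !inE; case: (boolP (is_leaf t u)) => //= lu.
  by rewrite (allK u lu) andbT.
Qed.

Lemma dec_on_bdec n t tau K : @dec_on n t tau K -> bdec_width_le f k.
Proof.
elim: n t tau K => [|n IH] t tau K kd.
  by apply: bdec_empty => e; case: (don_cov kd e) => v _ _; case: (ord0_absurd v).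
case: (boolP [forall v, is_leaf t v ==> (v \in K)]) => [/forallP allK|].
  by apply: dec_on_all kd _ => v; apply/implyP.
move/forallPn => [l]; rewrite negb_imply => /andP [lf lK].
case: (pickP (fun e : E => true)) => [e _|He]; last first.
  by apply: bdec_empty => e; have := He e.
case: n IH t tau K kd l lf lK => [|n] IH t tau K kd l lf lK.
  case: (don_cov kd e) => v vK _.
  by move: lK; rewrite (ord1 l) -(ord1 v) vK.
have [t' [tau' [K' kd']]] := dec_on_prune kd lf lK.
exact: IH kd'.
Qed.

End Prune.

(* Pushing a decomposition forward along pi : E1 -> E2: keep the leaves
   labelled in a transversal R of the fibres and prune the others. *)
Lemma bdec_push (E1 E2 : finType) (f1 : {set E1} -> nat) (f2 : {set E2} -> nat)
  (pi : E1 -> E2) (R : {set E1}) k :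
  {in R &, injective pi} -> (forall y, exists2 x, x \in R & pi x = y) ->
  (forall X, f2 (pi @: (X :&: R)) <= f1 X)%N ->
  bdec_width_le f1 k -> bdec_width_le f2 k.
Proof.
move=> piI piS Hf [n [t [tau [tr dg inj cov wd]]]].
pose K := [set v | is_leaf t v && (tau v \in R)].
apply: (@dec_on_bdec _ _ _ n t (fun v => pi (tau v)) K); split => //.
- by move=> v; rewrite inE => /andP [].
- move=> u v; rewrite !inE => /andP [lu Ru] /andP [lv Rv] /(piI _ _ Ru Rv).
  exact: inj.
- move=> y; case: (piS y) => x xR <-; case: (cov x) => v lv Ev.
  by exists v; rewrite ?inE ?lv ?Ev.
- move=> a b tab.
  have sideK : tau @: (side t a b :&: K) = tau @: side t a b :&: R.
    apply/setP => z; rewrite inE; apply/imsetP/andP.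
      case=> v; rewrite inE => /andP [sv]; rewrite inE => /andP [_ Rv] ->.
      by split => //; apply: imset_f.
    case=> /imsetP [v sv ->] Rv; exists v => //.
    by rewrite !inE Rv andbT; move: sv; rewrite inE => /andP [-> ->].
  by rewrite imset_comp sideK; apply: leq_trans (Hf _) (wd a b tab).
Qed.

Definition leaves n (t : rel 'I_n) : {set 'I_n} := [set v | is_leaf t v].

Lemma in_leaves n (t : rel 'I_n) v : (v \in leaves t) = is_leaf t v.
Proof. by rewrite inE. Qed.

Lemma imsetD1_in (T1 T2 : finType) (g : T1 -> T2) (A : {set T1}) a :
  {in A &, injective g} -> a \in A -> g @: (A :\ a) = g @: A :\ g a.
Proof.
move=> gI aA; apply/setP => z; rewrite !inE; apply/imsetP/andP.
  case=> v; rewrite !inE => /andP [va vA] ->; split; last exact: imset_f.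
  by apply: contra va => /eqP /(gI _ _ vA aA) ->.
case=> za /imsetP [v vA Ev]; exists v => //; rewrite !inE vA andbT.
by apply: contraNneq za => va; rewrite Ev va.
Qed.

Variant split_vertex_spec n (u : 'I_n.+2) : Prop :=
 | SplitOld v of u = lift ord_max (lift ord_max v)
 | SplitNew1 of u = lift ord_max ord_max
 | SplitNew2 of u = ord_max.

Lemma split_vertexP n (u : 'I_n.+2) : split_vertex_spec u.
Proof.
case: (unliftP ord_max u) => [u1 ->|->]; last exact: SplitNew2.
case: (unliftP ord_max u1) => [v ->|->]; [exact: SplitOld | exact: SplitNew1].
Qed.

(* Splitting the leaf lr of t: two new leaves new1, new2 are attached to lr.
   Given a labelling tau of the leaves of t and a new label x, new1 takes over
   the label of lr and new2 receives x. *)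
Section SplitLeaf.
Variables (n : nat) (t : rel 'I_n) (lr : 'I_n).

Definition split_tree : rel 'I_n.+2 :=
  attach (attach t lr ord_max) (lift ord_max lr) ord_max.

Local Notation old v := (lift ord_max (lift ord_max v) : 'I_n.+2).
Local Notation new1 := (lift ord_max ord_max : 'I_n.+2).
Local Notation new2 := (ord_max : 'I_n.+2).

Lemma split_oo a b : split_tree (old a) (old b) = t a b.
Proof. by rewrite /split_tree !attach_ll. Qed.
Lemma split_o1 a : split_tree (old a) new1 = (a == lr).
Proof. by rewrite /split_tree attach_ll attach_lL. Qed.
Lemma split_1o a : split_tree new1 (old a) = (a == lr).
Proof. by rewrite /split_tree attach_ll attach_Ll. Qed.
Lemma split_o2 a : split_tree (old a) new2 = (a == lr).
Proof. by rewrite /split_tree attach_lL (inj_eq (@lift_inj _ _)). Qed.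
Lemma split_2o a : split_tree new2 (old a) = (a == lr).
Proof. by rewrite /split_tree attach_Ll (inj_eq (@lift_inj _ _)). Qed.
Lemma split_11 : split_tree new1 new1 = false.
Proof. by rewrite /split_tree attach_ll attach_LL. Qed.
Lemma split_12 : split_tree new1 new2 = false.
Proof. by rewrite /split_tree attach_lL (negbTE (neq_lift _ _)). Qed.
Lemma split_21 : split_tree new2 new1 = false.
Proof. by rewrite /split_tree attach_Ll (negbTE (neq_lift _ _)). Qed.
Lemma split_22 : split_tree new2 new2 = false.
Proof. by rewrite /split_tree attach_LL. Qed.

Lemma split_tree_tree : is_tree t -> is_tree split_tree.
Proof. by move=> tr; apply: attach_tree; apply: attach_tree. Qed.

Lemma tdeg_split_old v : tdeg split_tree (old v) = (tdeg t v + (v == lr) + (v == lr))%N.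
Proof.
by rewrite /split_tree !tdeg_attach_lift (inj_eq (@lift_inj _ _)).
Qed.
Lemma tdeg_split_new1 : tdeg split_tree new1 = 1%N.
Proof.
by rewrite /split_tree tdeg_attach_lift tdeg_attach_new (negbTE (neq_lift _ _)).
Qed.
Lemma tdeg_split_new2 : tdeg split_tree new2 = 1%N.
Proof. by rewrite /split_tree tdeg_attach_new. Qed.

Lemma split_side_oo a b v :
  connect (del_edge split_tree (old a) (old b)) (old a) (old v) =
  connect (del_edge t a b) a v.
Proof. by rewrite /split_tree !attach_side_old. Qed.
Lemma split_side_o1 a b :
  connect (del_edge split_tree (old a) (old b)) (old a) new1 =
  connect (del_edge t a b) a lr.
Proof. by rewrite /split_tree attach_side_old attach_side_old_new. Qed.
Lemma split_side_o2 a b :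
  connect (del_edge split_tree (old a) (old b)) (old a) new2 =
  connect (del_edge t a b) a lr.
Proof. by rewrite /split_tree attach_side_old_new attach_side_old. Qed.

Lemma split_side_1 u : connect (del_edge split_tree new1 (old lr)) new1 u = (u == new1).
Proof.
case: (split_vertexP u) => [v ->|->|->].
- rewrite /split_tree attach_side_old attach_side_new.
  by rewrite (inj_eq (@lift_inj _ _)) eq_sym (negbTE (neq_lift _ _)).
- by rewrite eqxx; exact: connect0.
- rewrite /split_tree attach_side_old_new attach_side_new (negbTE (neq_lift _ _)).
  by rewrite eq_sym (negbTE (neq_lift _ _)).
Qed.

Lemma split_side_2 u : connect (del_edge split_tree new2 (old lr)) new2 u = (u == new2).
Proof. by rewrite /split_tree attach_side_new. Qed.

Hypothesis lr_leaf : is_leaf t lr.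

Lemma leaf_split_old v : is_leaf split_tree (old v) = is_leaf t v && (v != lr).
Proof.
rewrite /is_leaf tdeg_split_old.
case: (eqVneq v lr) => [->|ne]; last by rewrite !addn0 andbT.
by rewrite andbF /= !addn1 ltnS ltn0.
Qed.
Lemma leaf_split_new1 : is_leaf split_tree new1.
Proof. by rewrite /is_leaf tdeg_split_new1. Qed.
Lemma leaf_split_new2 : is_leaf split_tree new2.
Proof. by rewrite /is_leaf tdeg_split_new2. Qed.

Lemma split_tree_deg : (forall v, tdeg t v <= 3)%N -> forall u, (tdeg split_tree u <= 3)%N.
Proof.
move=> dg u; case: (split_vertexP u) => [v ->|->|->];
  rewrite ?tdeg_split_new1 ?tdeg_split_new2 // tdeg_split_old.
case: (eqVneq v lr) => [->|]; last by rewrite !addn0.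
by rewrite -addnA; move: lr_leaf; rewrite /is_leaf -(leq_add2r 2).
Qed.

Hypothesis tr : is_tree t.

Lemma split_side_o1_lr u :
  connect (del_edge split_tree (old lr) new1) (old lr) u = (u != new1).
Proof.
case: tr => _ _ C _.
case: (split_vertexP u) => [v ->|->|->].
- rewrite /split_tree attach_side_old attach_side_m //.
  by rewrite (inj_eq (@lift_inj _ _)) eq_sym (negbTE (neq_lift _ _)).
- by rewrite /split_tree attach_side_old attach_side_m_new eqxx.
- by rewrite /split_tree attach_side_old_new (neq_lift _ _) connect0.
Qed.

Lemma split_side_o2_lr u :
  connect (del_edge split_tree (old lr) new2) (old lr) u = (u != new2).
Proof.
have C1 : forall y, connect (attach t lr ord_max) (lift ord_max lr) y.
  by case: (attach_tree lr (ord_max : 'I_n.+1) tr) => _ _ C _ y; apply: C.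
case: (unliftP ord_max u) => [v ->|->].
- by rewrite /split_tree attach_side_m // eq_sym (negbTE (neq_lift _ _)).
- by rewrite /split_tree attach_side_m_new eqxx.
Qed.


Variables (E : finType) (tau : 'I_n -> E) (x : E).

Definition split_lab (u : 'I_n.+2) : E :=
  if unlift ord_max u is Some u1 then
    (if unlift ord_max u1 is Some u0 then tau u0 else tau lr) else x.

Lemma split_lab_old v : split_lab (old v) = tau v.
Proof. by rewrite /split_lab !liftK. Qed.
Lemma split_lab_new1 : split_lab new1 = tau lr.
Proof. by rewrite /split_lab liftK unlift_none. Qed.
Lemma split_lab_new2 : split_lab new2 = x.
Proof. by rewrite /split_lab unlift_none. Qed.

Lemma split_lab_side_old a b :
  split_lab @: side split_tree (old a) (old b) =
  if lr \in side t a b then x |: tau @: side t a b else tau @: side t a b.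
Proof.
have lrS : (lr \in side t a b) = connect (del_edge t a b) a lr by rewrite inE lr_leaf.
apply/setP => z; apply/imsetP/idP.
  case=> u; rewrite inE; case: (split_vertexP u) => [v ->|->|->].
  - rewrite leaf_split_old // split_side_oo split_lab_old => /andP [/andP [lv _] cv] ->.
    have vS : v \in side t a b by rewrite inE lv.
    by case: ifP => _; rewrite ?inE imset_f ?orbT.
  - rewrite split_side_o1 split_lab_new1 -lrS => /andP [_ lrin] ->.
    by rewrite lrin inE imset_f ?orbT.
  - rewrite split_side_o2 split_lab_new2 -lrS => /andP [_ lrin] ->.
    by rewrite lrin !inE eqxx.
have oldP : forall v, v \in side t a b -> z = tau v ->
    exists2 u, u \in side split_tree (old a) (old b) & z = split_lab u.
  move=> v vin ->; move: (vin); rewrite inE => /andP [lv cv].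
  case: (eqVneq v lr) => [E1|ne].
    exists new1; last by rewrite split_lab_new1 E1.
    by rewrite inE leaf_split_new1 split_side_o1 -E1.
  exists (old v); last by rewrite split_lab_old.
  by rewrite inE leaf_split_old // lv ne split_side_oo.
case: ifP => lrin; last by case/imsetP => v /oldP; apply.
rewrite in_setU1 => /orP [/eqP ->|/imsetP [v /oldP]]; last by apply.
exists new2; last by rewrite split_lab_new2.
by rewrite inE leaf_split_new2 split_side_o2 -lrS.
Qed.

Lemma split_lab_side_1 : split_lab @: side split_tree new1 (old lr) = [set tau lr].
Proof.
have -> : side split_tree new1 (old lr) = [set new1].
  apply/setP => u; rewrite !inE split_side_1.
  by case: (eqVneq u new1) => [->|]; rewrite ?andbF ?leaf_split_new1.
by rewrite imset_set1 split_lab_new1.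
Qed.

Lemma split_lab_side_2 : split_lab @: side split_tree new2 (old lr) = [set x].
Proof.
have -> : side split_tree new2 (old lr) = [set new2].
  apply/setP => u; rewrite !inE split_side_2.
  by case: (eqVneq u new2) => [->|]; rewrite ?andbF ?leaf_split_new2.
by rewrite imset_set1 split_lab_new2.
Qed.

Lemma split_lab_leaves : split_lab @: leaves split_tree = x |: tau @: leaves t.
Proof.
apply/setP => z; apply/imsetP/idP.
  case=> u; rewrite in_leaves; case: (split_vertexP u) => [v ->|->|->].
  - rewrite leaf_split_old // split_lab_old => /andP [lv _] ->;
    by rewrite in_setU1 imset_f ?orbT ?in_leaves.
  - by move=> _ ->; rewrite split_lab_new1 in_setU1 imset_f ?orbT ?in_leaves.
  - by move=> _ ->; rewrite split_lab_new2 in_setU1 eqxx.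
rewrite in_setU1 => /orP [/eqP ->|/imsetP [v]].
  by exists new2; rewrite ?in_leaves ?leaf_split_new2 ?split_lab_new2.
rewrite in_leaves => lv ->; case: (eqVneq v lr) => [->|ne].
  by exists new1; rewrite ?in_leaves ?leaf_split_new1 ?split_lab_new1.
by exists (old v); rewrite ?in_leaves ?leaf_split_old ?lv ?ne ?split_lab_old.
Qed.

Hypotheses (tau_inj : {in leaves t &, injective tau}) (x_new : x \notin tau @: leaves t).

Lemma split_lab_inj : {in leaves split_tree &, injective split_lab}.
Proof.
have lrL : lr \in leaves t by rewrite in_leaves.
have oldL : forall a, old a \in leaves split_tree -> a \in leaves t /\ tau a != tau lr.
  move=> a; rewrite in_leaves leaf_split_old // => /andP [la na]; rewrite in_leaves la.
  split => //; apply: contra na => /eqP eq_lr.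
  by rewrite (tau_inj _ lrL eq_lr) // in_leaves.
have xL : forall a, a \in leaves t -> tau a != x.
  by move=> a aL; apply: contraNneq x_new => <-; apply: imset_f.
move=> u v lu lv.
case: (split_vertexP u) lu => [a ->|->|->] lu; case: (split_vertexP v) lv => [b ->|->|->] lv;
  rewrite ?split_lab_old ?split_lab_new1 ?split_lab_new2 => E0 //.
- by have [la _] := oldL _ lu; have [lb _] := oldL _ lv; rewrite (tau_inj la lb E0).
- by have [_] := oldL _ lu; rewrite E0 eqxx.
- by have [la _] := oldL _ lu; move: (xL _ la); rewrite E0 eqxx.
- by have [_] := oldL _ lv; rewrite E0 eqxx.
- by move: (xL _ lrL); rewrite E0 eqxx.
- by have [lb _] := oldL _ lv; move: (xL _ lb); rewrite E0 eqxx.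
- by move: (xL _ lrL); rewrite E0 eqxx.
Qed.


Lemma split_lab_side_o1 :
  split_lab @: side split_tree (old lr) new1 = (x |: tau @: leaves t) :\ tau lr.
Proof.
have -> : side split_tree (old lr) new1 = leaves split_tree :\ new1.
  by apply/setP => u; rewrite !inE split_side_o1_lr // andbC.
rewrite (imsetD1_in (g := split_lab)) ?split_lab_leaves ?split_lab_new1 //.
  exact: split_lab_inj.
by rewrite in_leaves leaf_split_new1.
Qed.

Lemma split_lab_side_o2 :
  split_lab @: side split_tree (old lr) new2 = (x |: tau @: leaves t) :\ x.
Proof.
have -> : side split_tree (old lr) new2 = leaves split_tree :\ new2.
  by apply/setP => u; rewrite !inE split_side_o2_lr // andbC.
rewrite (imsetD1_in (g := split_lab)) ?split_lab_leaves ?split_lab_new2 //.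
  exact: split_lab_inj.
by rewrite in_leaves leaf_split_new2.
Qed.

End SplitLeaf.

(* Starting from a decomposition whose
   leaf labels are R, elements are added one at a time by splitting the leaf
   of their representative. *)
Section Grow.
Variables (E : finType) (f : {set E} -> nat) (k : nat) (rep : E -> E) (R : {set E}).
Hypothesis rep_in : forall x, rep x \in R.
Hypothesis rep_id : forall x, x \in R -> rep x = x.
Hypothesis fibre_small : forall r (X : {set E}), X \subset [set y | rep y == r] ->
  (f X <= k)%N /\ (f (~: X) <= k)%N.

(* An element not yet placed in S is read at the place of its representative. *)
Definition place (S : {set E}) x := if x \in S then x else rep x.

(* A decomposition of the elements of S, measured on all of E through
   [place S]. *)
Record grow_dec (S : {set E}) n (t : rel 'I_n) (tau : 'I_n -> E) : Prop := GrowDec {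
  gd_tree : is_tree t;
  gd_deg : forall v, (tdeg t v <= 3)%N;
  gd_inj : {in leaves t &, injective tau};
  gd_lab : tau @: leaves t = S;
  gd_width : forall a b, t a b -> (f (place S @^-1: (tau @: side t a b)) <= k)%N }.

Lemma grow_dec_full n t tau : @grow_dec setT n t tau -> bdec_width_le f k.
Proof.
case=> tr dg inj lab wd; exists n, t, tau; split => //.
- by move=> u v lu lv; apply: inj; rewrite in_leaves.
- move=> e; have : e \in tau @: leaves t by rewrite lab inE.
  by case/imsetP => v; rewrite in_leaves => lv ->; exists v.
- move=> a b tab; have := wd a b tab.
  suff -> : place setT @^-1: (tau @: side t a b) = tau @: side t a b by [].
  by apply/setP => y; rewrite !inE /place inE.
Qed.

Lemma place_in (S : {set E}) y : R \subset S -> place S y \in S.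
Proof. by rewrite /place => RS; case: ifP => // _; apply: (subsetP RS). Qed.

Section AddOne.
Variables (S : {set E}) (x : E).
Hypotheses (RS : R \subset S) (xS : x \notin S).
Local Notation S' := (x |: S).

Lemma place_add_x y : (place S' y == x) = (y == x).
Proof.
rewrite /place in_setU1; case: (eqVneq y x) => [->|ne]; rewrite ?eqxx //=.
case: ifP => _; first exact/negbTE.
by apply/negbTE; apply: contraNneq xS => <-; apply: (subsetP RS).
Qed.

Lemma place_add_other y : y != x -> place S' y = place S y.
Proof. by move=> ne; rewrite /place in_setU1 (negbTE ne). Qed.

(* On a set of placed elements, x is seen exactly where rep x is seen. *)
Lemma preim_place_add (Z : {set E}) : Z \subset S ->
  place S' @^-1: (if rep x \in Z then x |: Z else Z) = place S @^-1: Z.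
Proof.
move=> ZS; apply/setP => y; rewrite !inE.
case: (eqVneq y x) => [->|ne].
  have -> : place S' x = x by apply/eqP; rewrite place_add_x.
  have -> : place S x = rep x by rewrite /place (negbTE xS).
  case: ifP => Zr; rewrite ?in_setU1 ?eqxx //.
  by apply/negbTE; apply: contraNN xS => /(subsetP ZS).
rewrite place_add_other //; case: ifP => _ //.
by rewrite in_setU1 -(place_add_other ne) place_add_x (negbTE ne).
Qed.

(* The new edges separate a subset of the fibre of rep x from the rest. *)
Lemma preim_place_add_fibre z : z \in [set rep x; x] ->
  place S' @^-1: [set z] \subset [set y | rep y == rep x].
Proof.
rewrite !inE => zin; apply/subsetP => y; rewrite !inE => /eqP E0.
case/orP: zin => /eqP Ez; rewrite {z}Ez in E0; last first.
  by move/eqP: E0; rewrite place_add_x => /eqP ->.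
move: E0; rewrite /place in_setU1; case: (eqVneq y x) => [->|ne] /=; first by rewrite eqxx.
by case: ifP => [_ ->|_ ->]; rewrite ?(rep_id (rep_in x)).
Qed.

Lemma preim_place_addD1 z : place S' @^-1: (S' :\ z) = ~: (place S' @^-1: [set z]).
Proof.
apply/setP => y; rewrite !inE -in_setU1 place_in ?andbT //.
exact: subset_trans RS (subsetU1 x S).
Qed.

Lemma width_add_new z : z \in [set rep x; x] ->
  (f (place S' @^-1: [set z]) <= k)%N /\ (f (place S' @^-1: (S' :\ z)) <= k)%N.
Proof. by move=> zin; rewrite preim_place_addD1; apply: fibre_small; exact: preim_place_add_fibre. Qed.

Lemma grow_dec_add n (t : rel 'I_n) tau lr :
  grow_dec S t tau -> is_leaf t lr -> tau lr = rep x ->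
  grow_dec S' (split_tree t lr) (split_lab lr tau x).
Proof.
case=> tr dg inj lab wd lrl taulr.
have xnew : x \notin tau @: leaves t by rewrite lab.
have r_sep : forall a b, (rep x \in tau @: side t a b) = (lr \in side t a b).
  move=> a b; rewrite -taulr; apply/imsetP/idP => [[v vin]|lrin]; last by exists lr.
  have lv : v \in leaves t by move: vin; rewrite !inE => /andP [].
  have lrL : lr \in leaves t by rewrite in_leaves.
  by move/(inj _ _ lrL lv) ->.
split.
- exact: split_tree_tree.
- exact: split_tree_deg.
- exact: split_lab_inj.
- by rewrite split_lab_leaves // lab.
move=> u w; case: (split_vertexP u) => [a ->|->|->]; case: (split_vertexP w) => [b ->|->|->];
  rewrite ?split_oo ?split_o1 ?split_1o ?split_o2 ?split_2o ?split_11 ?split_12 ?split_21 ?split_22 //.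
- move=> tab; rewrite split_lab_side_old // -r_sep preim_place_add ?wd //.
  apply/subsetP => z /imsetP [v]; rewrite inE => /andP [lv _] ->.
  by rewrite -lab imset_f ?in_leaves.
- move/eqP ->; rewrite split_lab_side_o1 // lab taulr.
  by apply: (width_add_new _).2; rewrite !inE eqxx.
- move/eqP ->; rewrite split_lab_side_o2 // lab.
  by apply: (width_add_new _).2; rewrite !inE eqxx orbT.
- move/eqP ->; rewrite split_lab_side_1 taulr.
  by apply: (width_add_new _).1; rewrite !inE eqxx.
- move/eqP ->; rewrite split_lab_side_2.
  by apply: (width_add_new _).1; rewrite !inE eqxx orbT.
Qed.

End AddOne.

Lemma grow_dec_bdec (S : {set E}) n (t : rel 'I_n) tau :
  R \subset S -> grow_dec S t tau -> bdec_width_le f k.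
Proof.
have [m] := ubnP #|~: S|; elim: m S n t tau => // m IH S n t tau lt RS gd.
case: (set_0Vmem (~: S)) => [S0|[x]].
  by move: gd; rewrite -[S]setCK S0 setC0; apply: grow_dec_full.
rewrite inE => xS.
have : rep x \in tau @: leaves t by rewrite (gd_lab gd) (subsetP RS).
case/imsetP => lr; rewrite in_leaves => lrl taulr.
apply: IH (grow_dec_add RS xS gd lrl (esym taulr)); last exact: subset_trans RS (subsetU1 x S).
rewrite -ltnS; apply: leq_trans lt; rewrite ltnS; apply: proper_card.
rewrite properC properE subsetU1 /=; apply/subsetPn.
by exists x; rewrite ?in_setU1 ?eqxx.
Qed.

End Grow.

(* In a decomposition of width k every singleton has order at most k (it is
   the side of the edge at its leaf), provided the whole set has order 0. *)
Lemma bdec_singleton (E : finType) (f : {set E} -> nat) k : f setT = 0 ->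
  bdec_width_le f k -> forall e, (f [set e] <= k)%N.
Proof.
move=> fT [n [t [tau [tr dg inj cov wd]]]] e.
case: (cov e) => l ll <-.
case: (pickP (fun m => t l m)) => [m tlm|none].
  rewrite -imset_set1; suff -> : [set l] = side t l m by apply: wd.
  apply/esym/setP => u; rewrite !inE; apply/andP/eqP => [[_ /connect_no_out -> //]|->].
    move=> w; rewrite /del_edge /=; apply/negP => /andP [tlw].
    by rewrite (leaf_nb_uniq ll tlw tlm) !eqxx.
  by split => //; exact: connect0.
have one_vertex : forall u, u = l.
  move=> u; case: tr => _ _ C _; apply: connect_no_out (C l u) => w.
  by rewrite none.
suff -> : [set tau l] = setT by rewrite fT.
apply/setP => e'; rewrite !inE; case: (cov e') => l' _ <-.
by rewrite (one_vertex l') eqxx.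
Qed.

(* Pulling a decomposition back along a surjection pi : E1 -> E2: the
   decomposition relabelled by a section of pi is grown into one of E1. *)
Lemma bdec_pull (E1 E2 : finType) (f1 : {set E1} -> nat) (f2 : {set E2} -> nat)
  (pi : E1 -> E2) k :
  (forall y, exists x, pi x = y) ->
  (forall Y : {set E2}, f1 (pi @^-1: Y) <= f2 Y)%N ->
  (forall X : {set E1}, f1 (~: X) = f1 X) ->
  (forall y (X : {set E1}), X \subset pi @^-1: [set y] -> f1 X <= f2 [set y])%N ->
  f2 setT = 0 ->
  bdec_width_le f2 k -> bdec_width_le f1 k.
Proof.
move=> surj Hpre Hsym Hfibre fT bd.
have surj' : forall y, exists x, pi x == y by move=> y; case: (surj y) => x <-; exists x.
pose sec y := xchoose (surj' y).
have secK : forall y, pi (sec y) = y by move=> y; apply/eqP; exact: (xchooseP (surj' y)).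
have secI : injective sec by move=> y1 y2 E; rewrite -(secK y1) E secK.
pose rep x := sec (pi x).
pose R := [set sec y | y in E2].
have rep_in : forall x, rep x \in R by move=> x; apply: imset_f.
have rep_id : forall x, x \in R -> rep x = x.
  by move=> x /imsetP [y _ ->]; rewrite /rep secK.
have fibre_small : forall r (X : {set E1}), X \subset [set y | rep y == r] ->
    (f1 X <= k)%N /\ (f1 (~: X) <= k)%N.
  move=> r X sub; rewrite Hsym; suff fX : (f1 X <= k)%N by [].
  apply: leq_trans (Hfibre (pi r) _ _) (bdec_singleton fT bd _).
  apply/subsetP => y /(subsetP sub); rewrite !inE => /eqP <-.
  by rewrite /rep secK.
case: bd => n [t [tauD [tr dg inj cov wd]]].
apply: (@grow_dec_bdec E1 f1 k rep R rep_in rep_id fibre_small R n t (sec \o tauD)) => //.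
split => //.
- by move=> u v; rewrite !in_leaves => lu lv /secI; apply: inj.
- apply/setP => x; apply/imsetP/imsetP => [[v _ ->]|[y _ ->]]; first by exists (tauD v).
  by case: (cov y) => v lv <-; exists v; rewrite ?in_leaves.
- move=> a b tab; apply: leq_trans (wd a b tab); apply: leq_trans (Hpre _).
  apply: eq_leq; congr f1; apply/setP => y; rewrite !inE.
  have -> : place rep R y = rep y by rewrite /place; case: ifP => // /rep_id.
  by rewrite /rep (imset_comp sec tauD) (mem_imset _ _ secI).
Qed.

(* Every finite set has a branch decomposition: grow the one-vertex tree. *)
Lemma bdec_exists (E : finType) (f : {set E} -> nat) : exists k, bdec_width_le f k.
Proof.
case: (pickP (fun e : E => true)) => [e0 _|He]; last first.
  by exists 0; apply: bdec_empty => e; have := He e.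
pose K := \max_(X : {set E}) f X; exists K.
have one : forall u v : 'I_1, u = v by move=> u v; rewrite (ord1 u) (ord1 v).
have leaf1 : forall v : 'I_1, is_leaf (fun _ _ => false) v.
  by move=> v; rewrite /is_leaf /tdeg; apply: leq_trans (max_card _) _; rewrite card_ord.
apply: (@grow_dec_bdec E f K (fun _ => e0) [set e0] _ _ _ [set e0] 1
          (fun _ _ => false) (fun _ => e0)) => //.
- by move=> x; rewrite inE.
- by move=> x; rewrite inE => /eqP.
- by move=> r X _; split; apply: leq_bigmax.
split => //.
- split => //; last by case=> u [[|w p] []].
  by move=> u v; rewrite (one u v); exact: connect0.
- by move=> v; apply: leq_trans (leaf1 v) _.
- apply/setP => x; rewrite inE; apply/imsetP/eqP => [[v _ ->] //|->].
  by exists ord0; rewrite ?in_leaves ?leaf1.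
Qed.

(* A satisfiable property of naturals has a least witness (by excluded middle,
   as the property need not be decidable). *)
Lemma ex_minimal (P : nat -> Prop) : (exists k, P k) ->
  exists k, P k /\ forall k', P k' -> (k <= k')%N.
Proof.
case=> n Pn; elim: n {-2}n (leqnn n) Pn => [|n IH] m lem Pm.
  exists m; split => // k' _; by move: lem; rewrite leqn0 => /eqP ->.
case: (classic (exists k', P k' /\ (k' < m)%N)) => [[k' [Pk' lt]]|N].
  by apply: (IH k') => //; rewrite -ltnS; apply: leq_trans lt lem.
exists m; split => // k' Pk'; rewrite leqNgt; apply/negP => lt.
by apply: N; exists k'.
Qed.

Lemma common_bwidth (E1 E2 : finType) (f1 : {set E1} -> nat) (f2 : {set E2} -> nat) :
  (forall k, bdec_width_le f1 k <-> bdec_width_le f2 k) ->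
  exists k, is_bwidth f1 k /\ is_bwidth f2 k.
Proof.
move=> equiv; have [k [bk mink]] := ex_minimal (bdec_exists f1).
exists k; split; split => //; first by apply/equiv.
by move=> k' /equiv; apply: mink.
Qed.

Local Open Scope fset_scope.

Definition edge_image (psi : nat -> nat) (H : digraph) : {fset nat * nat} :=
  [fset (psi e.1, psi e.2) | e in de H].

Definition head_tail_faithful (psi : nat -> nat) (H : digraph) : Prop :=
  forall e1 e2, e1 \in de H -> e2 \in de H -> psi e1.2 = psi e2.1 -> e1.2 = e2.1.

Lemma edge_image_comp (phi psi : nat -> nat) (H D1 : digraph) :
  de D1 = edge_image phi H -> edge_image psi D1 = edge_image (psi \o phi) H.
Proof.
rewrite /edge_image => ->; apply/fsetP => z; apply/imfsetP/imfsetP => [[d /imfsetP [e eH ->] ->]|[e eH ->]].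
  by exists e.
by exists (phi e.1, phi e.2) => //; apply/imfsetP; exists e.
Qed.

Lemma faithful_comp (phi psi : nat -> nat) (H D1 : digraph) :
  de D1 = edge_image phi H -> head_tail_faithful phi H ->
  head_tail_faithful psi D1 -> head_tail_faithful (psi \o phi) H.
Proof.
move=> ED1 Fphi Fpsi e1 e2 e1H e2H E; apply: Fphi => //.
by apply: (Fpsi (phi e1.1, phi e1.2) (phi e2.1, phi e2.2)) => //;
  rewrite ED1; apply/imfsetP; [exists e1|exists e2].
Qed.

Lemma faithful_inj (psi : nat -> nat) (H : digraph) : wf_digraph H ->
  {in dv H &, injective psi} -> head_tail_faithful psi H.
Proof.
move=> wfH psiI e1 e2 e1H e2H; apply: psiI.
- by have [] := wfH e1 e1H.
- by have [] := wfH e2 e2H.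
Qed.

Lemma identifiable_cases (H : digraph) x y :
  identifiable H x y ->
  (forall e, e \in de H -> (e.2 != x) && (e.2 != y)) \/
  (forall e, e \in de H -> (e.1 != x) && (e.1 != y)).
Proof.
have no_head z e : is_source H z -> e \in de H -> e.2 != z.
  case/andP => _ /existsPn N eH; apply/negP => /eqP E.
  by have := N [` eH]; rewrite /= E eqxx.
have no_tail z e : is_sink H z -> e \in de H -> e.1 != z.
  case/andP => _ /existsPn N eH; apply/negP => /eqP E.
  by have := N [` eH]; rewrite /= E eqxx.
case/and4P => _ _ _ /orP [/andP [sx sy]|/andP [sx sy]].
  by left => e eH; rewrite !no_head.
by right => e eH; rewrite !no_tail.
Qed.

Lemma ident_map_eq (H : digraph) x y g u v :
  g \notin (dv H `\ x `\ y) -> u \in dv H -> v \in dv H ->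
  ident_map x y g u = ident_map x y g v ->
  u = v \/ (((u == x) || (u == y)) && ((v == x) || (v == y))).
Proof.
move=> fr uH vH; rewrite /ident_map.
case: ifP => hu; case: ifP => hv; rewrite ?hu ?hv; try by right.
- move=> E; subst v; move: fr; rewrite !inE vH.
  by move: hv => /negbT; rewrite negb_or => /andP [-> ->].
- move=> E; subst u; move: fr; rewrite !inE uH.
  by move: hu => /negbT; rewrite negb_or => /andP [-> ->].
- by left.
Qed.

Lemma identify_step (H : digraph) x y g :
  wf_digraph H -> identifiable H x y -> g \notin (dv H `\ x `\ y) ->
  wf_digraph (identify H x y g) /\ head_tail_faithful (ident_map x y g) H.
Proof.
move=> wfH idf fr; set phi := ident_map x y g.
have cs := identifiable_cases idf.
have phiE u v := @ident_map_eq H x y g u v fr.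
split.
  move=> e1 /imfsetP [e eH ->] /=.
  have [e1H e2H ne] := wfH e eH.
  have inV : forall v, v \in dv H -> phi v \in g |` (dv H `\ x `\ y).
    move=> v vH; rewrite /phi /ident_map; case: ifP => h; rewrite !inE ?eqxx //.
    by move: h => /negbT; rewrite negb_or => /andP [-> ->]; rewrite vH orbT.
  split; [exact: inV | exact: inV |].
  apply/negP => /eqP /(phiE _ _ e1H e2H) [E|]; first by rewrite E eqxx in ne.
  case: cs => /(_ e eH) /andP [h1 h2] /andP [a b].
    by move: b; rewrite (negbTE h1) (negbTE h2).
  by move: a; rewrite (negbTE h1) (negbTE h2).
move=> e1 e2 e1H e2H E.
have [_ a2 _] := wfH e1 e1H; have [b1 _ _] := wfH e2 e2H.
case: (phiE _ _ a2 b1 E) => // /andP [h1 h2].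
case: cs => [/(_ e1 e1H)|/(_ e2 e2H)] /andP [c1 c2].
  by move: h1; rewrite (negbTE c1) (negbTE c2).
by move: h2; rewrite (negbTE c1) (negbTE c2).
Qed.

Lemma obtained_relabel H D' : obtained H D' -> wf_digraph H ->
  wf_digraph D' /\ exists psi : nat -> nat,
    de D' = edge_image psi H /\ head_tail_faithful psi H.
Proof.
elim=> {H D'} [D|H x y g D idf fr _ IH] wfH.
  split => //; exists id; split; last by move=> e1 e2.
  apply/fsetP => z; apply/idP/imfsetP => [zD|[e eD ->]]; last by case: e eD.
  by exists z => //; case: z zD.
have [wf1 Fphi] := identify_step wfH idf fr.
have [wfD [psi [ED Fpsi]]] := IH wf1.
split => //; exists (psi \o ident_map x y g); split.
  by rewrite ED; apply: edge_image_comp.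
exact: faithful_comp Fpsi.
Qed.

Lemma ss_split_relabel H D : wf_digraph H -> ss_split H D ->
  exists psi : nat -> nat, de D = edge_image psi H /\ head_tail_faithful psi H.
Proof.
move=> wfH [_ [D' [ob [f [finj _ fE]]]]].
have [wfD' [psi [ED' Fpsi]]] := obtained_relabel ob wfH.
exists (f \o psi); split.
  by rewrite -fE; exact: (edge_image_comp f ED').
exact: faithful_comp ED' Fpsi (faithful_inj wfD' finj).
Qed.

Lemma u_order_compl (H : digraph) (X : {set de H}) : u_order (~: X) = u_order X.
Proof.
rewrite /u_order; congr (#|` _|); apply/fsetP => v; rewrite !inE setCK.
by rewrite [X in _ && X]andbC.
Qed.

Lemma d_order_setT (D : digraph) : @d_order D setT = 0%N.
Proof.
rewrite /d_order; apply/eqP; rewrite cardfs_eq0; apply/eqP/fsetP => v.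
rewrite !inE; apply/negP => /orP [] /andP [_ /andP [/existsP [e] ] ]; rewrite !inE //.
by move=> _ /existsP [e']; rewrite !inE.
Qed.

Lemma d_orderP (D : digraph) (Z : {set de D}) w : reflect
  (w \in dv D /\ exists d1 d2 : de D,
     [/\ (val d1).2 = w, (val d2).1 = w & (d1 \in Z) != (d2 \in Z)])
  (w \in SV Z `|` SV (~: Z)).
Proof.
rewrite in_fsetU /SV !inE /=; apply: (iffP idP).
  case/orP => /andP [wD /andP [/existsP [d1 /andP [d1Z /eqP h1]]
                               /existsP [d2 /andP [d2Z /eqP h2]]]];
  split => //; exists d1, d2; split => //; move: d1Z d2Z; rewrite !inE ?negbK.
  by move=> /negbTE -> ->.
  by move=> -> /negbTE ->.
case=> wD [d1 [d2 [h1 h2]]]; rewrite wD /=.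
case: (boolP (d1 \in Z)) => d1Z /= d2Z; apply/orP; [right|left]; apply/andP; split.
- by apply/existsP; exists d1; rewrite !inE negbK d1Z h1 eqxx.
- by apply/existsP; exists d2; rewrite !inE -(negbK (d2 \in Z)) d2Z h2 eqxx.
- by apply/existsP; exists d1; rewrite !inE d1Z h1 eqxx.
- by apply/existsP; exists d2; rewrite -(negbK (d2 \in Z)) d2Z h2 eqxx.
Qed.

Section Orders.
Variables (H D : digraph) (psi : nat -> nat).
Hypotheses (wfH : wf_digraph H) (wfD : wf_digraph D).
Hypothesis deg1 : forall v, is_source H v || is_sink H v -> degree H v = 1%N.
Hypothesis ED : de D = edge_image psi H.
Hypothesis Fpsi : head_tail_faithful psi H.

Lemma pi_mem (e : de H) : (psi (val e).1, psi (val e).2) \in de D.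
Proof. by rewrite ED; apply/imfsetP; exists (val e) => //; apply: valP. Qed.

Definition pi (e : de H) : de D := [` pi_mem e].

Lemma val_pi e : val (pi e) = (psi (val e).1, psi (val e).2).
Proof. by []. Qed.

Lemma pi_surj (d : de D) : exists e, pi e = d.
Proof.
have := valP d; rewrite [X in _ \in X]ED => /imfsetP [e eH Ed].
by exists [` eH]; apply: val_inj; rewrite val_pi Ed.
Qed.

Definition internal v :=
  [exists i : de H, (val i).2 == v] && [exists o : de H, (val o).1 == v].

(* Vertices incident with two edges have degree >= 2, hence are neither
   sources nor sinks. *)
Lemma two_internal v (e e' : de H) : v \in dv H -> e != e' ->
  incident v e -> incident v e' -> internal v.
Proof.
move=> vH ne ie ie'.
have dg : (2 <= degree H v)%N.
  have <- : #|` [fset val e; val e']| = 2 by rewrite cardfs2 (inj_eq val_inj) ne.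
  rewrite /degree; apply: fsubset_leq_card; apply/fsubsetP => z.
  rewrite !inE => /orP [] /eqP ->.
    by rewrite (valP e) /=; rewrite /incident in ie.
  by rewrite (valP e') /=; rewrite /incident in ie'.
have : ~~ (is_source H v || is_sink H v) by apply/negP => /deg1 d1; rewrite d1 in dg.
by rewrite negb_or /is_source /is_sink vH /= !negbK.
Qed.

Definition boundary (X : {set de H}) : {fset nat} :=
  [fset v in dv H | [exists e in X, incident v e] && [exists e in ~: X, incident v e]].

Lemma u_orderE X : u_order X = #|` boundary X|.
Proof. by []. Qed.

Lemma boundaryP (X : {set de H}) v : reflect
  (v \in dv H /\ exists e e', [/\ e \in X, e' \notin X, incident v e & incident v e'])
  (v \in boundary X).
Proof.
rewrite /boundary !inE /=; apply: (iffP idP).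
  case/andP => vH /andP [/existsP [e /andP [eX ie]] /existsP [e' /andP [e'X ie']]].
  by split => //; exists e, e'; rewrite inE in e'X.
case=> vH [e [e' [eX e'X ie ie']]]; rewrite vH /=; apply/andP; split.
  by apply/existsP; exists e; rewrite eX.
by apply/existsP; exists e'; rewrite inE e'X.
Qed.

Lemma boundary_internal (X : {set de H}) v : v \in boundary X -> internal v.
Proof.
case/boundaryP => vH [e [e' [eX e'X ie ie']]]; apply: (two_internal vH _ ie ie').
by apply: contraNneq e'X => <-.
Qed.

Lemma boundary_dirP (X : {set de H}) v : reflect
  (v \in dv H /\ exists i o : de H,
     [/\ (val i).2 = v, (val o).1 = v & (i \in X) != (o \in X)])
  (v \in boundary X).
Proof.
apply: (iffP idP) => [vin|[vH [i [o [iv ov io]]]]]; last first.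
  apply/boundaryP; split => //.
  have ii : incident v i by rewrite /incident iv eqxx orbT.
  have io' : incident v o by rewrite /incident ov eqxx.
  by case: (boolP (i \in X)) io => iX /=; rewrite ?negbK => oX;
    [exists i, o | exists o, i].
have [vH [e [e' [eX e'X ie ie']]]] := boundaryP _ _ vin.
have /andP [/existsP [i /eqP iv] /existsP [o /eqP ov]] := boundary_internal vin.
split => //.
case: (boolP ((i \in X) != (o \in X))) => [d|]; first by exists i, o.
rewrite negbK => /eqP Eio.
case: (boolP (i \in X)) => iX.
  case/orP: ie' => /eqP h.
    by exists i, e'; split => //; rewrite iX (negbTE e'X).
  by exists e', o; split => //; rewrite -Eio iX (negbTE e'X).
case/orP: ie => /eqP h.
  by exists i, e; split => //; rewrite eX (negbTE iX).
by exists e, o; split => //; rewrite -Eio eX (negbTE iX).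
Qed.

Lemma psi_inj_boundary (X : {set de H}) : {in boundary X &, injective psi}.
Proof.
move=> v v' /boundary_internal /andP [/existsP [i /eqP iv] _].
move=> /boundary_internal /andP [_ /existsP [o /eqP ov]] E.
by rewrite -iv -ov; apply: Fpsi (valP i) (valP o) _; rewrite iv ov.
Qed.

Lemma d_order_preim (Y : {set de D}) : d_order Y = u_order (pi @^-1: Y).
Proof.
rewrite u_orderE /d_order.
suff -> : SV Y `|` SV (~: Y) = psi @` boundary (pi @^-1: Y).
  by rewrite (eqP (introT (card_in_imfsetP _ _) (@psi_inj_boundary _))).
apply/fsetP => w; apply/d_orderP/imfsetP.
  case=> wD [d1 [d2 [h1 h2 d12]]].
  have [e1 E1] := pi_surj d1; have [e2 E2] := pi_surj d2; subst d1 d2.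
  rewrite val_pi /= in h1 h2.
  have E12 : (val e1).2 = (val e2).1 by apply: Fpsi (valP e1) (valP e2) _; rewrite h1 h2.
  have [_ vH _] := wfH (valP e1).
  exists (val e1).2 => //; apply/boundary_dirP; split => //.
  by exists e1, e2; rewrite !inE.
case=> v /boundary_dirP [vH [i [o [iv ov io]]]] ->.
split; first by have [_ h _] := wfD (valP (pi i)); rewrite val_pi /= iv in h.
by exists (pi i), (pi o); rewrite !val_pi /= iv ov; move: io; rewrite !inE.
Qed.

Lemma incident_fibre (e x : de H) v : internal v -> pi x = pi e ->
  incident v e -> incident v x.
Proof.
case/andP => /existsP [i /eqP iv] /existsP [o /eqP ov] E.
have /pair_equal_spec [E1 E2] : val (pi x) = val (pi e) by rewrite E.
rewrite /incident => /orP [] /eqP ev.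
  apply/orP; left; apply/eqP.
  have : psi (val i).2 = psi (val x).1 by rewrite E1 ev iv.
  by move/(Fpsi (valP i) (valP x)) => <-.
apply/orP; right; apply/eqP.
have : psi (val x).2 = psi (val o).1 by rewrite E2 ev ov.
by move/(Fpsi (valP x) (valP o)) ->.
Qed.

Lemma d_order_image_le (R : {set de H}) : (forall d, exists2 r, r \in R & pi r = d) ->
  forall X, (d_order (pi @: (X :&: R)) <= u_order X)%N.
Proof.
move=> cov X; rewrite d_order_preim !u_orderE.
apply: fsubset_leq_card; apply/fsubsetP => v vin.
have [vH [e [e' [eZ e'Z ie ie']]]] := boundaryP _ _ vin.
have intv := boundary_internal vin.
move: eZ; rewrite inE => /imsetP [x]; rewrite inE => /andP [xX xR] Ex.
case: (cov (pi e')) => r' r'R Er'.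
apply/boundaryP; split => //; exists x, r'; split => //.
- apply: contra e'Z => r'X; rewrite inE -Er'; apply: imset_f; by rewrite inE r'X.
- exact: incident_fibre intv (esym Ex) ie.
- exact: incident_fibre intv Er' ie'.
Qed.

Lemma u_order_fibre_le y (X : {set de H}) : X \subset pi @^-1: [set y] ->
  (u_order X <= d_order [set y])%N.
Proof.
move=> sub; rewrite d_order_preim !u_orderE.
apply: fsubset_leq_card; apply/fsubsetP => v vin.
have [vH [e [e' [eX e'X ie ie']]]] := boundaryP _ _ vin.
have /andP [/existsP [i /eqP iv] /existsP [o /eqP ov]] := boundary_internal vin.
have ey : pi e = y by move: (subsetP sub e eX); rewrite !inE => /eqP.
have [_ _ noloop] := wfD (valP (pi e)); rewrite val_pi /= in noloop.
apply/boundaryP; split => //.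
case/orP: ie => /eqP h.
  exists e, i; split.
  - by rewrite !inE ey.
  - rewrite !inE -ey; apply/negP => /eqP E.
    have /pair_equal_spec [_ E2] : val (pi i) = val (pi e) by rewrite E.
    by move: noloop; rewrite h -E2 iv -h eqxx.
  - by rewrite /incident h eqxx.
  - by rewrite /incident iv eqxx orbT.
exists e, o; split.
- by rewrite !inE ey.
- rewrite !inE -ey; apply/negP => /eqP E.
  have /pair_equal_spec [E1 _] : val (pi o) = val (pi e) by rewrite E.
  by move: noloop; rewrite h -E1 ov eqxx.
- by rewrite /incident h eqxx orbT.
- by rewrite /incident ov eqxx.
Qed.

Lemma bdec_u_d k : bdec_width_le (@u_order H) k <-> bdec_width_le (@d_order D) k.
Proof.
have sec d : exists e, pi e == d by case: (pi_surj d) => e <-; exists e.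
have secK d : pi (xchoose (sec d)) = d by apply/eqP; exact: (xchooseP (sec d)).
split.
  apply: (@bdec_push _ _ _ _ pi [set xchoose (sec d) | d : de D]).
  - by move=> x y /imsetP [d1 _ ->] /imsetP [d2 _ ->]; rewrite !secK => ->.
  - by move=> d; exists (xchoose (sec d)); rewrite ?imset_f ?secK.
  - by apply: d_order_image_le => d; exists (xchoose (sec d)); rewrite ?imset_f ?secK.
apply: (@bdec_pull _ _ _ _ pi) => //.
- exact: pi_surj.
- by move=> Y; rewrite d_order_preim.
- exact: u_order_compl.
- exact: u_order_fibre_le.
- exact: d_order_setT.
Qed.

End Orders.

Theorem mainTheorem11 (D H : digraph) :
  wf_digraph D -> wf_digraph H -> ss_split H D ->
  exists k : nat, bw_u H k /\ dbw D k.
Proof.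
move=> wfD wfH split_HD.
have [psi [ED Fpsi]] := ss_split_relabel wfH split_HD.
have deg1 := split_HD.1.
exact: common_bwidth (bdec_u_d wfH wfD deg1 ED Fpsi).
Qed.
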